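(* Let $L$ be the smallest unimodal normal logic containing $p\to\Diamond p$, $\Diamond\Diamond\Diamond p\to\Diamond\Diamond p$ and $\Box\Box\Diamond\Diamond p\to\Diamond\Diamond\Box\Box p$. Then $L[1]=\mathbf K+(p\leftrightarrow\Box p)$ (in particular $L[1]$ is locally tabular), while $L[2]$ is not $1$-tabular.
   Context: Unimodal formulas over $p_0,p_1,\dots$ with $\to,\bot,\Diamond$; $\Box=\neg\Diamond\neg$. $\mathbf K$ is the smallest normal modal logic; $\mathbf K+\Psi$ the smallest normal logic containing $\Psi$. For this reflexive $2$-transitive logic, $\Diamond^*\varphi$ denotes $\Diamond\Diamond\varphi$ (equivalently $\varphi\vee\Diamond\varphi\vee\Diamond\Diamond\varphi$) and $\Box^*=\neg\Diamond^*\neg$. $B_0=\bot$, $B_{i+1}=p_{i+1}\to\Box^*(\Diamond^*p_{i+1}\vee B_i)$; $L[h]=L+B_h$. A logic is $k$-tabular if there are only finitely many formulas in $p_0,\dots,p_{k-1}$ up to provable equivalence in it; locally tabular if $k$-tabular for all finite $k$. *)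

From Stdlib Require Import List.
Import ListNotations.

Inductive form : Type :=
| Var : nat -> form
| Bot : form
| Imp : form -> form -> form
| Dia : form -> form.

Definition Neg (a : form) : form := Imp a Bot.
Definition Top : form := Neg Bot.
Definition Or (a b : form) : form := Imp (Neg a) b.
Definition And (a b : form) : form := Neg (Imp a (Neg b)).
Definition Iff (a b : form) : form := And (Imp a b) (Imp b a).
Definition Box (a : form) : form := Neg (Dia (Neg a)).

Fixpoint subst (s : nat -> form) (a : form) : form :=
  match a with
  | Var n => s n
  | Bot => Bot
  | Imp a b => Imp (subst s a) (subst s b)
  | Dia a => Dia (subst s a)
  end.

Definition p (n : nat) : form := Var n.

(* K + Psi : the smallest normal modal logic containing the set Psi.
   Modal part: the K axiom for Box with necessitation, plus the
   usual Diamond axioms/rule (all valid in every Kripke frame), closed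
   under MP and uniform substitution. *)
Inductive thm (Psi : form -> Prop) : form -> Prop :=
| ax_extra : forall a, Psi a -> thm Psi a
| ax_A1 : forall a b, thm Psi (Imp a (Imp b a))
| ax_A2 : forall a b c,
    thm Psi (Imp (Imp a (Imp b c)) (Imp (Imp a b) (Imp a c)))
| ax_A3 : forall a, thm Psi (Imp (Neg (Neg a)) a)
| ax_K : forall a b, thm Psi (Imp (Box (Imp a b)) (Imp (Box a) (Box b)))
| ax_Dbot : thm Psi (Neg (Dia Bot))
| ax_Dor : forall a b, thm Psi (Imp (Dia (Or a b)) (Or (Dia a) (Dia b)))
| r_MP : forall a b, thm Psi (Imp a b) -> thm Psi a -> thm Psi b
| r_Nec : forall a, thm Psi a -> thm Psi (Box a)
| r_DMon : forall a b, thm Psi (Imp a b) -> thm Psi (Imp (Dia a) (Dia b))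
| r_US : forall s a, thm Psi a -> thm Psi (subst s a).

Definition L_axioms (a : form) : Prop :=
  a = Imp (p 0) (Dia (p 0)) \/
  a = Imp (Dia (Dia (Dia (p 0)))) (Dia (Dia (p 0))) \/
  a = Imp (Box (Box (Dia (Dia (p 0))))) (Dia (Dia (Box (Box (p 0))))).

(* For this reflexive 2-transitive logic: Dia* a := Dia Dia a. *)
Definition DiaS (a : form) : form := Dia (Dia a).
Definition BoxS (a : form) : form := Neg (DiaS (Neg a)).

Fixpoint B (i : nat) : form :=
  match i with
  | 0 => Bot
  | S j => Imp (p (S j)) (BoxS (Or (DiaS (p (S j))) (B j)))
  end.

Definition L_h_axioms (h : nat) (a : form) : Prop := L_axioms a \/ a = B h.

Fixpoint vars_below (k : nat) (a : form) : Prop :=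
  match a with
  | Var n => n < k
  | Bot => True
  | Imp a b => vars_below k a /\ vars_below k b
  | Dia a => vars_below k a
  end.

Definition k_tabular (Psi : form -> Prop) (k : nat) : Prop :=
  exists reps : list form,
    forall a, vars_below k a ->
      exists b, In b reps /\ thm Psi (Iff a b).

Definition locally_tabular (Psi : form -> Prop) : Prop :=
  forall k, k_tabular Psi k.

Definition same_logic (Psi1 Psi2 : form -> Prop) : Prop :=
  forall a, thm Psi1 a <-> thm Psi2 a.

Definition K1_axioms (a : form) : Prop := a = Iff (p 0) (Box (p 0)).

(* In L[1] the axiom B_1 is the symmetry axiom [x -> Box* Dia* x] for the relation R^2.
   Combined with [Box Box Dia Dia x -> Dia Dia Box Box x] it gives [x -> Dia Dia Box Box x],
   its dual instance gives [Dia Dia Box Box x -> x], and then axiom 4 collapses [Dia x] to [x].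
   So L[1] and K + (p <-> Box p) are both the logic in which [Dia] is the identity; there every
   formula is equivalent to the propositional formula obtained by erasing its diamonds, whence
   local tabularity.
   L[2] is valid in the frame made of a reflexive sink, a hub seeing everything, and an
   infinite chain of reflexive points, each seeing the hub and the points below it.
   Colouring the chain alternately, the one-variable formulas "there is an alternating
   descending walk of length k" are pairwise inequivalent, so L[2] is not 1-tabular. *)
From Stdlib Require Import List Arith Lia Classical.
Import ListNotations.

Fixpoint dia_free (a : form) : Prop :=
  match a with
  | Dia _ => False
  | Imp a b => dia_free a /\ dia_free b
  | _ => True
  end.

(* The value on [Dia _] is junk: [eval] is only used on [dia_free] formulas. *)
Fixpoint eval (v : nat -> bool) (a : form) : bool :=
  match a with
  | Var n => v n
  | Bot => false
  | Imp a b => implb (eval v a) (eval v b)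
  | Dia _ => false
  end.

Fixpoint var_bound (a : form) : nat :=
  match a with
  | Var n => S n
  | Imp a b => max (var_bound a) (var_bound b)
  | _ => 0
  end.

Lemma eval_ext k a v v' :
  vars_below k a -> (forall n, n < k -> v n = v' n) -> eval v a = eval v' a.
Proof.
  induction a; simpl; intros Ha Hv; auto.
  destruct Ha. now rewrite IHa1, IHa2.
Qed.

Definition upd (v : nat -> bool) (j : nat) (b : bool) : nat -> bool :=
  fun n => if Nat.eqb n j then b else v n.

Lemma upd_same v j b : upd v j b j = b.
Proof. unfold upd. now rewrite Nat.eqb_refl. Qed.

Lemma upd_other v j b n : n <> j -> upd v j b n = v n.
Proof. unfold upd. intro H. now destruct (Nat.eqb_spec n j). Qed.

(** * Propositional completeness *)

Inductive derives (Psi : form -> Prop) (G : list form) : form -> Prop :=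
| derives_hyp : forall a, In a G -> derives Psi G a
| derives_thm : forall a, thm Psi a -> derives Psi G a
| derives_mp : forall a b, derives Psi G (Imp a b) -> derives Psi G a -> derives Psi G b.

Lemma thm_imp_refl Psi a : thm Psi (Imp a a).
Proof.
  eapply r_MP; [eapply r_MP; [apply (ax_A2 Psi a (Imp a a) a) | apply ax_A1] | apply (ax_A1 Psi a a)].
Qed.

Lemma deduction Psi G g a : derives Psi (g :: G) a -> derives Psi G (Imp g a).
Proof.
  induction 1 as [a Ha|a Ha|a b _ IH1 _ IH2].
  - destruct Ha as [<-|Ha].
    + apply derives_thm, thm_imp_refl.
    + eapply derives_mp; [apply derives_thm, ax_A1 | now apply derives_hyp].
  - eapply derives_mp; [apply derives_thm, ax_A1 | now apply derives_thm].
  - eapply derives_mp; [eapply derives_mp; [apply derives_thm, ax_A2 | exact IH1] | exact IH2].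
Qed.

Lemma derives_weaken Psi G G' a :
  derives Psi G a -> incl G G' -> derives Psi G' a.
Proof.
  induction 1; intros HG.
  - now apply derives_hyp, HG.
  - now apply derives_thm.
  - eapply derives_mp; eauto.
Qed.

Lemma derives_nil Psi a : derives Psi [] a -> thm Psi a.
Proof.
  induction 1 as [a []| |].
  - assumption.
  - eapply r_MP; eauto.
Qed.

Lemma derives_exfalso Psi G b : derives Psi G Bot -> derives Psi G b.
Proof.
  intro H.
  eapply derives_mp; [apply derives_thm, ax_A3|].
  eapply derives_mp; [apply derives_thm, (ax_A1 Psi Bot (Neg b)) | exact H].
Qed.

Definition literal (v : nat -> bool) (n : nat) : form :=
  if v n then Var n else Neg (Var n).

Fixpoint literals (v : nat -> bool) (k : nat) : list form :=
  match k with
  | 0 => []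
  | S j => literal v j :: literals v j
  end.

Lemma In_literals v k n : n < k -> In (literal v n) (literals v k).
Proof.
  induction k; simpl; intros; [lia|].
  destruct (Nat.eq_dec n k); [subst; now left | right; apply IHk; lia].
Qed.

Lemma literals_ext v v' k :
  (forall n, n < k -> v n = v' n) -> literals v k = literals v' k.
Proof.
  induction k; simpl; intros Hv; auto.
  unfold literal. rewrite (Hv k), IHk; auto.
Qed.

Lemma kalmar Psi t k v : dia_free t -> var_bound t <= k ->
  derives Psi (literals v k) (if eval v t then t else Neg t).
Proof.
  induction t as [n| |a IHa b IHb|a IHa]; simpl; intros Hd Hk.
  - apply derives_hyp. pose proof (In_literals v k n ltac:(lia)) as H.
    unfold literal in H. destruct (v n); exact H.
  - apply derives_thm, thm_imp_refl.
  - destruct Hd as [Hda Hdb].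
    specialize (IHa Hda ltac:(lia)). specialize (IHb Hdb ltac:(lia)).
    assert (Hincl : forall c, incl (literals v k) (c :: literals v k)) by (intros c x; now right).
    destruct (eval v a), (eval v b); simpl.
    + eapply derives_mp; [apply derives_thm, ax_A1 | exact IHb].
    + apply deduction.
      eapply derives_mp; [exact (derives_weaken _ _ _ _ IHb (Hincl _))|].
      eapply derives_mp; [apply derives_hyp; now left|].
      exact (derives_weaken _ _ _ _ IHa (Hincl _)).
    + eapply derives_mp; [apply derives_thm, ax_A1 | exact IHb].
    + apply deduction, derives_exfalso.
      eapply derives_mp; [exact (derives_weaken _ _ _ _ IHa (Hincl _))|].
      apply derives_hyp; now left.
  - destruct Hd.
Qed.

Lemma derives_cases Psi G t c :
  derives Psi (c :: G) t -> derives Psi (Neg c :: G) t -> derives Psi G t.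
Proof.
  intros H1 H2. apply deduction in H1. apply deduction in H2.
  assert (Hincl : incl G (Neg t :: G)) by (intros x; now right).
  eapply derives_mp; [apply derives_thm, ax_A3|].
  apply deduction.
  assert (Hnc : derives Psi (Neg t :: G) (Neg c)).
  { apply deduction.
    eapply derives_mp; [apply derives_hyp; right; now left|].
    eapply derives_mp; [apply derives_weaken with (1 := H1); intros x Hx; now do 2 right|].
    apply derives_hyp; now left. }
  eapply derives_mp; [apply derives_hyp; now left|].
  eapply derives_mp; [exact (derives_weaken _ _ _ _ H2 Hincl) | exact Hnc].
Qed.

Lemma derives_of_all_literals Psi t k :
  (forall v, derives Psi (literals v k) t) -> derives Psi [] t.
Proof.
  induction k as [|k IHk]; intros H.
  - exact (H (fun _ => true)).
  - apply IHk. intro v.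
    assert (Hlit : forall b, derives Psi (literal (upd v k b) k :: literals v k) t).
    { intro b. rewrite <- (literals_ext (upd v k b)); [exact (H _)|].
      intros n Hn. apply upd_other. lia. }
    apply (derives_cases _ _ _ (Var k)).
    + specialize (Hlit true). unfold literal in Hlit. now rewrite upd_same in Hlit.
    + specialize (Hlit false). unfold literal in Hlit. now rewrite upd_same in Hlit.
Qed.

Theorem thm_of_tautology Psi t :
  dia_free t -> (forall v, eval v t = true) -> thm Psi t.
Proof.
  intros Hd Hv. apply derives_nil, (derives_of_all_literals _ _ (var_bound t)).
  intro v. pose proof (kalmar Psi t (var_bound t) v Hd (le_n _)) as H.
  now rewrite Hv in H.
Qed.

Lemma thm_tautology_instance Psi (l : list form) t :
  dia_free t -> (forall v, eval v t = true) -> thm Psi (subst (fun n => nth n l Bot) t).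
Proof. intros. now apply r_US, thm_of_tautology. Qed.

Ltac truth_table :=
  let v := fresh "v" in
  intro v; simpl; repeat match goal with |- context [v ?n] => destruct (v n) end; reflexivity.

(* [by_tautology [a0; a1; ...] t] closes a goal [thm Psi t'] with [t'] the instance [t[a_i/p_i]] of the tautology [t]. *)
Ltac by_tautology l t :=
  apply (thm_tautology_instance _ l t); [simpl; tauto | truth_table].

Lemma imp_trans Psi a b c :
  thm Psi (Imp a b) -> thm Psi (Imp b c) -> thm Psi (Imp a c).
Proof.
  intros H1 H2. eapply r_MP; [eapply r_MP; [|exact H1]|exact H2].
  by_tautology [a;b;c] (Imp (Imp (Var 0) (Var 1)) (Imp (Imp (Var 1) (Var 2)) (Imp (Var 0) (Var 2)))).
Qed.

Lemma contra Psi a b : thm Psi (Imp a b) -> thm Psi (Imp (Neg b) (Neg a)).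
Proof.
  intro H. eapply r_MP; [|exact H].
  by_tautology [a;b] (Imp (Imp (Var 0) (Var 1)) (Imp (Neg (Var 1)) (Neg (Var 0)))).
Qed.

Lemma contra_neg Psi a b : thm Psi (Imp (Neg a) b) -> thm Psi (Imp (Neg b) a).
Proof.
  intro H. eapply r_MP; [|exact H].
  by_tautology [a;b] (Imp (Imp (Neg (Var 0)) (Var 1)) (Imp (Neg (Var 1)) (Var 0))).
Qed.

Lemma iff_intro Psi a b :
  thm Psi (Imp a b) -> thm Psi (Imp b a) -> thm Psi (Iff a b).
Proof.
  intros H1 H2. eapply r_MP; [eapply r_MP; [|exact H1]|exact H2].
  by_tautology [a;b] (Imp (Imp (Var 0) (Var 1)) (Imp (Imp (Var 1) (Var 0)) (Iff (Var 0) (Var 1)))).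
Qed.

Lemma iff_mp Psi a b : thm Psi (Iff a b) -> thm Psi (Imp a b).
Proof.
  intro H. eapply r_MP; [|exact H].
  by_tautology [a;b] (Imp (Iff (Var 0) (Var 1)) (Imp (Var 0) (Var 1))).
Qed.

Lemma iff_mpr Psi a b : thm Psi (Iff a b) -> thm Psi (Imp b a).
Proof.
  intro H. eapply r_MP; [|exact H].
  by_tautology [a;b] (Imp (Iff (Var 0) (Var 1)) (Imp (Var 1) (Var 0))).
Qed.

Lemma iff_trans Psi a b c :
  thm Psi (Iff a b) -> thm Psi (Iff b c) -> thm Psi (Iff a c).
Proof.
  intros H1 H2. apply iff_intro; eapply imp_trans.
  - exact (iff_mp _ _ _ H1).
  - exact (iff_mp _ _ _ H2).
  - exact (iff_mpr _ _ _ H2).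
  - exact (iff_mpr _ _ _ H1).
Qed.

Lemma iff_imp Psi a a' b b' :
  thm Psi (Iff a a') -> thm Psi (Iff b b') -> thm Psi (Iff (Imp a b) (Imp a' b')).
Proof.
  intros H1 H2. eapply r_MP; [eapply r_MP; [|exact H1]|exact H2].
  by_tautology [a;a';b;b'] (Imp (Iff (Var 0) (Var 1)) (Imp (Iff (Var 2) (Var 3))
     (Iff (Imp (Var 0) (Var 2)) (Imp (Var 1) (Var 3))))).
Qed.

Lemma iff_dia Psi a b : thm Psi (Iff a b) -> thm Psi (Iff (Dia a) (Dia b)).
Proof.
  intro H. apply iff_intro; apply r_DMon; [exact (iff_mp _ _ _ H) | exact (iff_mpr _ _ _ H)].
Qed.

Lemma thm_mono (Psi1 Psi2 : form -> Prop) :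
  (forall a, Psi1 a -> thm Psi2 a) -> forall a, thm Psi1 a -> thm Psi2 a.
Proof.
  intros H a D. induction D.
  - auto.
  - apply ax_A1.
  - apply ax_A2.
  - apply ax_A3.
  - apply ax_K.
  - apply ax_Dbot.
  - apply ax_Dor.
  - eapply r_MP; eauto.
  - now apply r_Nec.
  - now apply r_DMon.
  - now apply r_US.
Qed.

Lemma thm_instance (Psi : form -> Prop) a x : Psi a -> thm Psi (subst (fun _ => x) a).
Proof. intro H. now apply r_US, ax_extra. Qed.

(** * Logics in which the diamond is the identity *)

Definition dia_trivial (Psi : form -> Prop) : Prop :=
  forall x, thm Psi (Iff (Dia x) x).

Fixpoint erase (a : form) : form :=
  match a with
  | Var n => Var n
  | Bot => Bot
  | Imp a b => Imp (erase a) (erase b)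
  | Dia a => erase a
  end.

Lemma dia_free_erase a : dia_free (erase a).
Proof. induction a; simpl; auto. Qed.

Lemma vars_below_erase k a : vars_below k a -> vars_below k (erase a).
Proof. induction a; simpl; tauto. Qed.

Section DiaTrivial.
Variable Psi : form -> Prop.
Hypothesis Psi_dia_trivial : dia_trivial Psi.

Lemma iff_erase a : thm Psi (Iff a (erase a)).
Proof.
  induction a; simpl.
  - apply iff_intro; apply thm_imp_refl.
  - apply iff_intro; apply thm_imp_refl.
  - now apply iff_imp.
  - exact (iff_trans _ _ _ _ (Psi_dia_trivial a) IHa).
Qed.

Lemma thm_of_erase_tautology a : (forall v, eval v (erase a) = true) -> thm Psi a.
Proof.
  intro Ht. eapply r_MP; [exact (iff_mpr _ _ _ (iff_erase a))|].
  apply thm_of_tautology; [apply dia_free_erase | exact Ht].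
Qed.

Lemma thm_mono_of_erase_tautologies (Psi' : form -> Prop) :
  (forall a, Psi' a -> forall v, eval v (erase a) = true) ->
  forall a, thm Psi' a -> thm Psi a.
Proof.
  intro H. apply thm_mono. intros a Ha. apply thm_of_erase_tautology, H, Ha.
Qed.

End DiaTrivial.

Definition ite (c x y : form) : form := And (Imp c x) (Imp (Neg c) y).

Fixpoint decision_trees (k : nat) : list form :=
  match k with
  | 0 => [Bot; Top]
  | S j => flat_map (fun t1 => map (fun t0 => ite (p j) t1 t0) (decision_trees j))
                    (decision_trees j)
  end.

Lemma decision_trees_dia_free k t : In t (decision_trees k) -> dia_free t.
Proof.
  revert t; induction k; simpl; intros t Ht.
  - destruct Ht as [<-|[<-|[]]]; simpl; auto.
  - apply in_flat_map in Ht. destruct Ht as [t1 [H1 H2]]. apply in_map_iff in H2.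
    destruct H2 as [t0 [<- H0]]. simpl. repeat split; auto.
Qed.

Lemma decision_trees_complete k (g : (nat -> bool) -> bool) :
  (forall v v', (forall n, n < k -> v n = v' n) -> g v = g v') ->
  exists t, In t (decision_trees k) /\ forall v, eval v t = g v.
Proof.
  revert g; induction k as [|k IHk]; intros g Hg.
  - assert (Hc : forall v, g v = g (fun _ => false)) by (intro v; apply Hg; lia).
    destruct (g (fun _ => false)) eqn:E; [exists Top | exists Bot];
      (split; [simpl; auto | intro v; now rewrite Hc]).
  - assert (Hb : forall b v v', (forall n, n < k -> v n = v' n) ->
                   g (upd v k b) = g (upd v' k b)).
    { intros b v v' H. apply Hg. intros n Hn. unfold upd.
      destruct (Nat.eqb_spec n k); auto. apply H; lia. }
    destruct (IHk _ (Hb true)) as [t1 [H1 E1]].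
    destruct (IHk _ (Hb false)) as [t0 [H0 E0]].
    exists (ite (p k) t1 t0). split.
    + simpl. apply in_flat_map. exists t1. split; auto. now apply in_map.
    + intro v. simpl. rewrite E1, E0.
      assert (Hu : g (upd v k (v k)) = g v).
      { apply Hg. intros n _. unfold upd. destruct (Nat.eqb_spec n k); congruence. }
      destruct (v k); simpl; rewrite Hu; now destruct (g v).
Qed.

Theorem locally_tabular_of_dia_trivial Psi : dia_trivial Psi -> locally_tabular Psi.
Proof.
  intros Hdia k. exists (decision_trees k). intros a Ha.
  destruct (decision_trees_complete k (fun v => eval v (erase a))) as [t [Ht Et]].
  { intros v v' H. apply (eval_ext k); auto. now apply vars_below_erase. }
  exists t. split; auto.
  eapply iff_trans; [apply (iff_erase _ Hdia)|].
  apply thm_of_tautology.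
  - simpl. pose proof (dia_free_erase a). pose proof (decision_trees_dia_free k t Ht). tauto.
  - intro v. simpl. rewrite Et. now destruct (eval v (erase a)).
Qed.

Lemma dn_intro Psi a : thm Psi (Imp a (Neg (Neg a))).
Proof. by_tautology [a] (Imp (Var 0) (Neg (Neg (Var 0)))). Qed.

Lemma boxS_mono Psi a b : thm Psi (Imp a b) -> thm Psi (Imp (BoxS a) (BoxS b)).
Proof. intro H. now apply contra, r_DMon, r_DMon, contra. Qed.

Lemma boxS_box_box Psi a : thm Psi (Imp (BoxS a) (Box (Box a))).
Proof. apply contra, r_DMon, ax_A3. Qed.

Lemma box_box_boxS Psi a : thm Psi (Imp (Box (Box a)) (BoxS a)).
Proof. apply contra, r_DMon, dn_intro. Qed.

Definition L1 := L_h_axioms 1.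

Lemma L1_T x : thm L1 (Imp x (Dia x)).
Proof. exact (thm_instance L1 _ x (or_introl (or_introl eq_refl))). Qed.

Lemma L1_four x : thm L1 (Imp (Dia (Dia (Dia x))) (Dia (Dia x))).
Proof. exact (thm_instance L1 _ x (or_introl (or_intror (or_introl eq_refl)))). Qed.

Lemma L1_W x : thm L1 (Imp (Box (Box (Dia (Dia x)))) (Dia (Dia (Box (Box x))))).
Proof. exact (thm_instance L1 _ x (or_introl (or_intror (or_intror eq_refl)))). Qed.

(* [B 1] is the B axiom [x -> Box* Dia* x] for the relation [R^2], up to a double negation. *)
Lemma L1_B x : thm L1 (Imp x (BoxS (DiaS x))).
Proof.
  eapply imp_trans; [exact (thm_instance L1 _ x (or_intror eq_refl)) |].
  apply boxS_mono, ax_A3.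
Qed.

Lemma L1_up x : thm L1 (Imp x (Dia (Dia (Box (Box x))))).
Proof.
  eapply imp_trans; [apply L1_B|].
  eapply imp_trans; [apply boxS_box_box | apply L1_W].
Qed.

(* Contrapositive of the instance [~ x -> Box* Dia* ~ x] of [L1_B]. *)
Lemma L1_down x : thm L1 (Imp (Dia (Dia (Box (Box x)))) x).
Proof.
  eapply imp_trans; [apply r_DMon, r_DMon, box_box_boxS|].
  eapply imp_trans; [apply dn_intro | apply contra_neg, (L1_B (Neg x))].
Qed.

Lemma L1_dia_trivial : dia_trivial L1.
Proof.
  intro x. apply iff_intro; [|apply L1_T].
  eapply imp_trans; [apply r_DMon, L1_up|].
  eapply imp_trans; [apply L1_four | apply L1_down].
Qed.

Lemma K1_dia_trivial : dia_trivial K1_axioms.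
Proof.
  intro x.
  assert (Hbox : thm K1_axioms (Iff (Neg x) (Box (Neg x))))
    by exact (thm_instance K1_axioms _ (Neg x) eq_refl).
  eapply iff_trans; [apply iff_dia; apply iff_intro; [apply dn_intro | apply ax_A3]|].
  eapply r_MP; [|exact Hbox].
  by_tautology [x; Dia (Neg (Neg x))] (Imp (Iff (Neg (Var 0)) (Neg (Var 1))) (Iff (Var 1) (Var 0))).
Qed.

Theorem L1_same_K1 : same_logic L1 K1_axioms.
Proof.
  intro a. split; revert a.
  - apply (thm_mono_of_erase_tautologies _ K1_dia_trivial).
    intros a [[Ha|[Ha|Ha]]|Ha]; subst a; truth_table.
  - apply (thm_mono_of_erase_tautologies _ L1_dia_trivial).
    intros a ->. truth_table.
Qed.

(** * Kripke semantics *)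

Section Kripke.
Variables (W : Type) (R : W -> W -> Prop).

Fixpoint sat (V : nat -> W -> Prop) (w : W) (a : form) : Prop :=
  match a with
  | Var n => V n w
  | Bot => False
  | Imp a b => sat V w a -> sat V w b
  | Dia a => exists y, R w y /\ sat V y a
  end.

Definition frame_valid (a : form) : Prop := forall V w, sat V w a.

Lemma sat_subst V s a w : sat V w (subst s a) <-> sat (fun n x => sat V x (s n)) w a.
Proof.
  revert w; induction a; simpl; intros w; try tauto.
  - rewrite IHa1, IHa2; tauto.
  - split; intros [y [Hy Hs]]; exists y; split; auto; apply IHa; auto.
Qed.

Lemma sat_Box V w a : sat V w (Box a) <-> forall y, R w y -> sat V y a.
Proof.
  simpl. split.
  - intros H y Hy. apply NNPP. intro Hn. apply H. eauto.
  - intros H [y [Hy Hn]]. apply Hn. auto.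
Qed.

Lemma sat_And V w a b : sat V w (And a b) <-> sat V w a /\ sat V w b.
Proof. simpl. split; [intro H; split; apply NNPP; tauto | tauto]. Qed.

Theorem thm_sound (Psi : form -> Prop) :
  (forall a, Psi a -> frame_valid a) -> forall a, thm Psi a -> frame_valid a.
Proof.
  intros HPsi a D. induction D as [a Ha| | | | | | | | | |s a _ IH]; intros V w.
  - exact (HPsi a Ha V w).
  - simpl. tauto.
  - simpl. tauto.
  - simpl. intro H. now apply NNPP.
  - simpl. intros H1 H2 [y [Hy Hn]]. apply H1. exists y. split; auto.
    intro Hab. apply Hn, Hab. apply NNPP. intro Hna. apply H2. eauto.
  - simpl. intros [y [_ []]].
  - simpl. intros [y [Hy H]] Hn. exists y. split; auto.
    apply H. intro Ha. apply Hn. eauto.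
  - exact (IHD1 V w (IHD2 V w)).
  - apply sat_Box. auto.
  - simpl. intros [y [Hy Ha]]. exists y. split; [exact Hy | exact (IHD V y Ha)].
  - apply sat_subst, IH.
Qed.

End Kripke.

Arguments sat {W} R V w a.

Lemma sat_iff_of_thm {W : Type} (R : W -> W -> Prop) (Psi : form -> Prop) V w a b :
  (forall c, Psi c -> frame_valid W R c) -> thm Psi (Iff a b) ->
  sat R V w a <-> sat R V w b.
Proof.
  intros HPsi H. pose proof (thm_sound W R Psi HPsi _ H V w) as Hab.
  unfold Iff in Hab. rewrite sat_And in Hab. simpl in Hab. tauto.
Qed.

(** * A frame for L[2] *)

Inductive point := Sink | Hub | Chain (n : nat).

Definition sees (x y : point) : Prop :=
  match x with
  | Sink => y = Sink
  | Hub => True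
  | Chain n => y = Hub \/ exists m, y = Chain m /\ m <= n
  end.

Lemma sees_refl x : sees x x.
Proof. destruct x; simpl; auto. right. now exists n. Qed.

Lemma sees2 x z : (exists y, sees x y /\ sees y z) <-> (x = Sink -> z = Sink).
Proof.
  split.
  - intros [y [H1 H2]] ->. simpl in H1. now subst.
  - intros H. destruct x.
    + exists Sink. rewrite (H eq_refl). simpl; auto.
    + exists Hub. simpl; auto.
    + exists Hub. simpl; auto.
Qed.

Lemma sat_DiaS V w a :
  sat sees V w (DiaS a) <-> exists z, (w = Sink -> z = Sink) /\ sat sees V z a.
Proof.
  simpl. split.
  - intros [y [Hy [z [Hz Hs]]]]. exists z. split; auto. apply sees2. eauto.
  - intros [z [Hz Hs]]. apply sees2 in Hz. destruct Hz as [y [H1 H2]]. eauto.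
Qed.

Lemma sat_BoxS V w a :
  sat sees V w (BoxS a) <-> forall z, (w = Sink -> z = Sink) -> sat sees V z a.
Proof.
  change (~ sat sees V w (DiaS (Neg a)) <-> forall z, (w = Sink -> z = Sink) -> sat sees V z a).
  rewrite sat_DiaS. split.
  - intros H z Hz. apply NNPP. intro Hn. apply H. eauto.
  - intros H [z [Hz Hn]]. now apply Hn, H.
Qed.

Lemma sat_Box_Box V w a :
  sat sees V w (Box (Box a)) <-> forall z, (w = Sink -> z = Sink) -> sat sees V z a.
Proof.
  rewrite sat_Box. split.
  - intros H z Hz. apply sees2 in Hz. destruct Hz as [y [H1 H2]].
    specialize (H y H1). rewrite sat_Box in H. auto.
  - intros H y Hy. rewrite sat_Box. intros z Hz. apply H, sees2. eauto.
Qed.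

Lemma L2_frame_valid a : L_h_axioms 2 a -> frame_valid point sees a.
Proof.
  intros Ha V w. destruct Ha as [[H|[H|H]]|H]; subst.
  - intro Hw. exists w. split; [apply sees_refl | exact Hw].
  - change (sat sees V w (DiaS (Dia (p 0))) -> sat sees V w (DiaS (p 0))).
    rewrite !sat_DiaS. intros [z [Hz [y [Hy Hs]]]]. exists y. split; auto.
    intros ->. specialize (Hz eq_refl). subst. exact Hy.
  - change (sat sees V w (Box (Box (DiaS (p 0)))) -> sat sees V w (DiaS (Box (Box (p 0))))).
    rewrite sat_Box_Box, sat_DiaS. intros H. exists Sink. split; auto.
    rewrite sat_Box_Box. intros z Hz. rewrite (Hz eq_refl).
    destruct (proj1 (sat_DiaS V Sink (p 0)) (H Sink (fun _ => eq_refl))) as [u [Hu Hs]].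
    now rewrite (Hu eq_refl) in Hs.
  - change (V 2 w -> sat sees V w (BoxS (Or (DiaS (p 2)) (B 1)))).
    intro H2. rewrite sat_BoxS. intros z Hz.
    change (~ sat sees V z (DiaS (p 2)) -> sat sees V z (B 1)). intro Hn.
    destruct z.
    + change (V 1 Sink -> sat sees V Sink (BoxS (Or (DiaS (p 1)) Bot))). intro H1.
      rewrite sat_BoxS. intros z Hsz. rewrite (Hsz eq_refl).
      change (~ sat sees V Sink (DiaS (p 1)) -> False). intro Hn'. apply Hn'.
      rewrite sat_DiaS. now exists Sink.
    + exfalso. apply Hn. rewrite sat_DiaS. exists w. split; [discriminate | exact H2].
    + exfalso. apply Hn. rewrite sat_DiaS. exists w. split; [discriminate | exact H2].
Qed.

Definition V_alt (n : nat) (w : point) : Prop :=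
  match w with Sink => True | Hub => False | Chain m => Nat.even m = true end.

(* Only [Sink] satisfies [Box (p 0)] under [V_alt], so [in_chain] singles out the chain, and
   [chain_depth k] asks for a descending walk of length [k] along which [p 0] alternates. *)
Definition in_chain : form := Neg (Dia (Box (p 0))).

Definition parity_literal (k : nat) : form := if Nat.even k then p 0 else Neg (p 0).

Fixpoint chain_depth (k : nat) : form :=
  match k with
  | 0 => And in_chain (p 0)
  | S j => And (And in_chain (parity_literal (S j))) (Dia (chain_depth j))
  end.

Lemma chain_depth_vars k : vars_below 1 (chain_depth k).
Proof.
  induction k; simpl; unfold parity_literal; repeat split; auto;
    destruct (Nat.even (S k)); simpl; auto.
Qed.

Lemma sat_in_chain w : sat sees V_alt w in_chain <-> exists n, w = Chain n.
Proof.
  change (~ sat sees V_alt w (Dia (Box (p 0))) <-> exists n, w = Chain n).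
  split.
  - intro H. destruct w; eauto; exfalso; apply H; exists Sink; (split; [simpl; auto|]);
      apply sat_Box; intros y Hy; simpl in Hy; subst; simpl; auto.
  - intros [n ->] [y [Hy Hb]]. rewrite sat_Box in Hb.
    specialize (Hb Hub). destruct Hy as [->|[m [-> _]]]; simpl in Hb; apply Hb; simpl; auto.
Qed.

Lemma sat_chain_depth k w :
  sat sees V_alt w (chain_depth k) <->
  exists n, w = Chain n /\ k <= n /\ Nat.even n = Nat.even k.
Proof.
  revert w; induction k as [|k IHk]; intro w.
  - simpl chain_depth. rewrite sat_And, sat_in_chain. split.
    + intros [[n ->] H]. exists n. simpl in H. repeat split; auto; lia.
    + intros [n [-> [_ H]]]. split; eauto.
  - simpl chain_depth. rewrite !sat_And, sat_in_chain. split.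
    + intros [[[n ->] Hl] [y [Hy Hr]]]. apply IHk in Hr. destruct Hr as [m [-> [Hkm Hem]]].
      destruct Hy as [Hy|[m' [Hm' Hle]]]; [discriminate|]. injection Hm' as <-.
      unfold parity_literal in Hl. rewrite Nat.even_succ, <- Nat.negb_even in Hl |- *.
      assert (Hn : Nat.even n = negb (Nat.even k)).
      { destruct (Nat.even k); simpl in Hl;
          [destruct (Nat.even n); [exfalso; auto | reflexivity] | exact Hl]. }
      exists n. repeat split; auto.
      assert (m <> n) by (intros ->; rewrite Hem in Hn; now destruct (Nat.even k)).
      lia.
    + intros [n [-> [Hk He]]]. split; [split; [eauto|]|].
      * unfold parity_literal. destruct (Nat.even (S k)); simpl; [exact He | congruence].
      * exists (Chain (pred n)). split.
        -- simpl. right. exists (pred n). split; auto; lia.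
        -- apply IHk. exists (pred n). repeat split; [lia|].
           destruct n as [|n]; [lia|]. rewrite !Nat.even_succ, <- !Nat.negb_even in He.
           simpl. now destruct (Nat.even n), (Nat.even k).
Qed.

Lemma chain_depth_separated i j :
  (forall w, sat sees V_alt w (chain_depth i) <-> sat sees V_alt w (chain_depth j)) -> i = j.
Proof.
  intro H.
  assert (Hself : forall k, sat sees V_alt (Chain k) (chain_depth k))
    by (intro k; apply sat_chain_depth; now exists k).
  assert (Hdeep : forall k n, sat sees V_alt (Chain n) (chain_depth k) -> k <= n).
  { intros k n Hk. apply sat_chain_depth in Hk. destruct Hk as [m [E [Hm _]]].
    now injection E as <-. }
  apply Nat.le_antisymm.
  - apply Hdeep, H, Hself.
  - apply Hdeep, H, Hself.
Qed.

Lemma finite_cover_pigeonhole {A B : Type} (E : A -> B -> Prop) (f : nat -> A) (reps : list B) :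
  (forall i j b, E (f i) b -> E (f j) b -> i = j) ->
  ~ (forall n, exists b, In b reps /\ E (f n) b).
Proof.
  revert f; induction reps as [|b reps IH]; intros f Hinj Hcover.
  - destruct (Hcover 0) as [b [[] _]].
  - destruct (classic (exists n, E (f n) b)) as [[n0 Hn0]|Hnone].
    + apply (IH (fun n => f (S (n0 + n)))).
      * intros i j c Hi Hj. specialize (Hinj _ _ c Hi Hj). lia.
      * intro n. destruct (Hcover (S (n0 + n))) as [c [[<-|Hc] Hn]].
        -- specialize (Hinj _ _ b Hn Hn0). lia.
        -- eauto.
    + apply (IH f Hinj). intro n. destruct (Hcover n) as [c [[<-|Hc] Hn]].
      * exfalso. eauto.
      * eauto.
Qed.

Lemma not_k_tabular_of_separated Psi k (f : nat -> form) :
  (forall n, vars_below k (f n)) ->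
  (forall i j b, thm Psi (Iff (f i) b) -> thm Psi (Iff (f j) b) -> i = j) ->
  ~ k_tabular Psi k.
Proof.
  intros Hvars Hsep [reps Hreps].
  apply (finite_cover_pigeonhole (fun a b => thm Psi (Iff a b)) f reps Hsep).
  intro n. exact (Hreps _ (Hvars n)).
Qed.

Theorem L2_not_1_tabular : ~ k_tabular (L_h_axioms 2) 1.
Proof.
  apply (not_k_tabular_of_separated _ _ chain_depth chain_depth_vars).
  intros i j b Hi Hj. apply chain_depth_separated. intro w.
  rewrite (sat_iff_of_thm _ _ V_alt w _ _ L2_frame_valid Hi).
  symmetry. exact (sat_iff_of_thm _ _ V_alt w _ _ L2_frame_valid Hj).
Qed.

Theorem mainTheorem11 :
  same_logic (L_h_axioms 1) K1_axioms /\
  locally_tabular (L_h_axioms 1) /\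
  ~ k_tabular (L_h_axioms 2) 1.
Proof.
  split; [exact L1_same_K1|]. split.
  - exact (locally_tabular_of_dia_trivial _ L1_dia_trivial).
  - exact L2_not_1_tabular.
Qed.
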